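(* Let $C\subset\mathbb{R}^n$ be a compact convex set containing $0$. Let $g\in C$ with $g\ne0$ and let $H$ be a symmetric positive definite $n\times n$ matrix. Set $s=-Hg$, let $g_+$ be any maximizer of $z\mapsto z^Ts$ over $C$, and set $y=g_+-g$, $V=I-\frac{sy^T}{s^Ty}$, $H_+=VHV^T+\frac{ss^T}{s^Ty}$. Then $$\det H_+\le \frac{\det H}{1+\operatorname{sym}(C)}.$$
   Context: The symmetry measure of $C$ is $\operatorname{sym}(C)=\max\{t: g\in C\Rightarrow -tg\in C\}$. (Under the hypotheses, $s^Ty\ge g^THg>0$, so $H_+$ is well defined.) *)

From HB Require Import structures.
From mathcomp Require Import all_boot all_order all_algebra.
From mathcomp Require Import all_classical all_reals all_analysis.
Set Implicit Arguments. Unset Strict Implicit. Unset Printing Implicit Defensive.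
Import Order.TTheory GRing.Theory Num.Theory.
Import numFieldNormedType.Exports.
Local Open Scope classical_set_scope.
Local Open Scope ring_scope.

Definition dotv (R : realType) (n : nat) (u v : 'cV[R]_n) : R := (u^T *m v) 0 0.

Definition sym_posdef (R : realType) (n : nat) (H : 'M[R]_n) : Prop :=
  H^T = H /\ forall x : 'cV[R]_n, x != 0 -> 0 < dotv x (H *m x).

(* symmetry measure sym(C) = max {t : g \in C -> -t g \in C}
   (taken as the supremum of that set of reals) *)
Definition symm (R : realType) (n : nat) (C : set 'cV[R]_n) : R :=
  sup [set t : R | forall z, C z -> C (- (t *: z))].

Definition bfgs_update (R : realType) (n : nat) (H : 'M[R]_n) (s y : 'cV[R]_n)
  : 'M[R]_n :=
  let V := 1%:M - (dotv s y)^-1 *: (s *m y^T) in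
  V *m H *m V^T + (dotv s y)^-1 *: (s *m s^T).

From HB Require Import structures.
From mathcomp Require Import all_boot all_order all_algebra.
From mathcomp Require Import all_classical all_reals all_analysis.
From mathcomp Require Import polyrcf ring.

Set Implicit Arguments.
Unset Strict Implicit.
Unset Printing Implicit Defensive.

Import Order.TTheory GRing.Theory Num.Theory.
Import numFieldNormedType.Exports.
Local Open Scope classical_set_scope.
Local Open Scope ring_scope.

(* With s = -Hg and q = g^T H g > 0, the update factors as H_+ = T H T^T
   with T = I + s (w - y/(s^T y))^T, w a suitable multiple of g; the matrix
   determinant lemma then gives det H_+ = det H * q / (s^T y).  Since -t g lies
   in C for every admissible t in the definition of sym(C), maximality of g_+
   gives s^T g_+ >= sym(C) q, hence s^T y = s^T g_+ + q >= (1 + sym(C)) q. *)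

Section DotProduct.
Context {R : realType} {n : nat}.
Implicit Types u v z : 'cV[R]_n.

Lemma dotvC u v : dotv u v = dotv v u.
Proof. by rewrite /dotv -[u^T *m v]trmxK trmx_mul trmxK mxE. Qed.

Lemma dotvBl u v z : dotv (u - v) z = dotv u z - dotv v z.
Proof. by rewrite /dotv linearB /= mulmxBl mxE [X in _ + X = _]mxE. Qed.

Lemma dotvZl (k : R) u z : dotv (k *: u) z = k * dotv u z.
Proof. by rewrite /dotv linearZ /= -scalemxAl [LHS]mxE. Qed.

Lemma dotvZr (k : R) u z : dotv u (k *: z) = k * dotv u z.
Proof. by rewrite dotvC dotvZl dotvC. Qed.

Lemma dotvNr u z : dotv u (- z) = - dotv u z.
Proof. by rewrite /dotv mulmxN [LHS]mxE. Qed.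

Lemma dotvv_ge0 u : 0 <= dotv u u.
Proof. by rewrite /dotv mxE; apply: sumr_ge0 => j _; rewrite !mxE -expr2 sqr_ge0. Qed.

End DotProduct.

Lemma det_1_add_rank1 (R : comPzRingType) n (u v : 'cV[R]_n) :
  \det (1%:M + u *m v^T) = 1 + (v^T *m u) 0 0.
Proof.
have E : block_mx 1%:M 0 v^T 1%:M *m
           (block_mx (1%:M + u *m v^T) u 0 1%:M *m block_mx 1%:M 0 (- v^T) 1%:M)
         = block_mx 1%:M u 0 (1%:M + v^T *m u) :> 'M[R]_(n + 1).
  rewrite !mulmx_block !(mulmx0, mul0mx, mulmx1, mul1mx, addr0, add0r).
  by rewrite mulmxN addrK mulmx1 subrr addrC.
have := congr1 determinant E.
rewrite !det_mulmx det_lblock !det_ublock det_lblock !det1 !mul1r !mulr1 => ->.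
by rewrite det_mx11 !mxE.
Qed.

(* x |-> det (x + A) is monic, hence positive for large x; by the intermediate
   value theorem it would vanish somewhere on [0, +oo) if det A <= 0. *)
Lemma det_gt0_of_shift_neq0 (R : rcfType) n (A : 'M[R]_n) :
  (forall c, 0 <= c -> \det (c%:M + A) != 0) -> 0 < \det A.
Proof.
move=> shift_neq0.
pose p := char_poly (- A).
have pE x : p.[x] = \det (x%:M + A).
  rewrite /p /char_poly -horner_evalE -det_map_mx; congr (\det _).
  apply/matrixP => i j.
  by rewrite !mxE rmorphB rmorphMn /= !horner_evalE hornerX hornerC opprK.
have lead_p : lead_coef p = 1 by apply/eqP; exact: char_poly_monic.
have [N p_large] : exists N, forall x, N <= x -> 1 <= p.[x].
  by rewrite -lead_p; apply: poly_pinfty_gt_lc; rewrite lead_p ltr01.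
rewrite ltNge; apply/negP => detA_le0.
pose M := Num.max N 0.
have M_ge0 : 0 <= M by rewrite le_max lexx orbT.
have pM_ge0 : 0 <= p.[M] by rewrite (le_trans ler01) // p_large // le_max lexx.
have p_sign : p.[0] <= 0 <= p.[M] by rewrite pM_ge0 pE raddf0 add0r detA_le0.
have [x /andP[x_ge0 _] /rootP px0] := poly_ivt M_ge0 p_sign.
by move: (shift_neq0 x x_ge0); rewrite -pE px0 eqxx.
Qed.

Lemma posdef_det_neq0 (R : realType) n (A : 'M[R]_n) :
  (forall x, x != 0 -> 0 < dotv x (A *m x)) -> \det A != 0.
Proof.
move=> A_pos; apply/det0P => -[v v_neq0 vA].
have := A_pos v^T; rewrite trmx_eq0 v_neq0 /dotv trmxK mulmxA vA mul0mx mxE.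
by rewrite ltxx => /(_ isT).
Qed.

Lemma det_gt0_of_posdef (R : realType) n (A : 'M[R]_n) :
  (forall x, x != 0 -> 0 < dotv x (A *m x)) -> 0 < \det A.
Proof.
move=> A_pos; apply: det_gt0_of_shift_neq0 => c c_ge0.
apply: posdef_det_neq0 => x x_neq0.
rewrite mulmxDl mul_scalar_mx /dotv mulmxDr -scalemxAr mxE [X in X + _]mxE.
by apply: ltr_wpDl; [exact: mulr_ge0 c_ge0 (dotvv_ge0 x) | exact: A_pos].
Qed.

Lemma rank1_congruence (R : comPzRingType) n (H V : 'M[R]_n) (s w : 'cV[R]_n) (a : R) :
  H^T = H -> V *m (H *m w) = 0 -> w^T *m H *m w = a%:M ->
  V *m H *m V^T + a *: (s *m s^T) = (V + s *m w^T) *m H *m (V + s *m w^T)^T.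
Proof.
move=> HT VHw wHw.
have wHV : w^T *m H *m V^T = 0.
  by rewrite -[H in LHS]HT -!trmx_mul mulmxA -mulmxA VHw trmx0.
rewrite linearD /= trmx_mul trmxK !mulmxDl !mulmxDr.
have VHws : V *m H *m (w *m s^T) = 0 by rewrite mulmxA -(mulmxA V) VHw mul0mx.
have swHV : s *m w^T *m H *m V^T = 0 by rewrite -!mulmxA (mulmxA w^T) wHV mulmx0.
have swHws : s *m w^T *m H *m (w *m s^T) = a *: (s *m s^T).
  by rewrite !mulmxA -(mulmxA s) -(mulmxA s _ w) wHw mul_mx_scalar scalemxAl.
by rewrite VHws swHV swHws addr0 add0r.
Qed.

Lemma det_bfgs_update_step (R : realType) n (H : 'M[R]_n) (g y : 'cV[R]_n) :
  H^T = H -> 0 < dotv g (H *m g) -> 0 < dotv (- (H *m g)) y ->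
  \det (bfgs_update H (- (H *m g)) y)
    = \det H * (dotv g (H *m g) / dotv (- (H *m g)) y).
Proof.
move=> HT; set s := - (H *m g); set q := dotv g (H *m g); set d := dotv s y.
move=> q_gt0 d_gt0.
pose a := d^-1; pose l := Num.sqrt (a / q); pose w := l *: g.
pose V := 1%:M - a *: (s *m y^T).
have ad : a * d = 1 by rewrite mulVf // gt_eqF.
have l2 : l * l = a / q by rewrite -expr2 sqr_sqrtr // divr_ge0 // ltW // invr_gt0.
have Vs : V *m s = 0.
  rewrite mulmxBl mul1mx -scalemxAl -mulmxA (mx11_scalar (y^T *m s)) mul_mx_scalar.
  by rewrite scalerA -/(dotv y s) dotvC ad scale1r subrr.
have VHw : V *m (H *m w) = 0.
  by rewrite -scalemxAr -[H *m g]opprK scalerN mulmxN -scalemxAr Vs scaler0 oppr0.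
have wHw : w^T *m H *m w = a%:M.
  rewrite (mx11_scalar (w^T *m H *m w)) -mulmxA -/(dotv w (H *m w)).
  by rewrite -scalemxAr dotvZl dotvZr mulrA l2 divfK // gt_eqF.
have T_rank1 : V + s *m w^T = 1%:M + s *m (w - a *: y)^T.
  rewrite [(w - _)^T]linearB /= [(a *: y)^T]linearZ /= mulmxBr -scalemxAr.
  by rewrite addrA addrAC.
have detT : 1 + dotv (w - a *: y) s = - (l * q).
  by rewrite dotvBl !dotvZl dotvNr -/q (dotvC y) ad; ring.
rewrite /bfgs_update -/d -/a -/V (rank1_congruence s HT VHw wHw) T_rank1.
rewrite !det_mulmx det_tr det_1_add_rank1 -/(dotv _ s) detT.
have -> : - (l * q) * \det H * - (l * q) = l * l * q * q * \det H by ring.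
by rewrite l2 /a; field; rewrite !gt_eqF.
Qed.

Section SymmetryMeasure.
Context {R : realType} {n : nat}.
Variable C : set 'cV[R]_n.

Lemma symm_ge0_le (b : R) : C 0 ->
  (forall t, (forall z, C z -> C (- (t *: z))) -> t <= b) -> 0 <= symm C <= b.
Proof.
move=> C0 ub.
have S0 : [set t | forall z, C z -> C (- (t *: z))] 0.
  by move=> z _; rewrite scale0r oppr0.
apply/andP; split; last by apply: ge_sup; [exists 0 | exact: ub].
by apply: ub_le_sup S0; exists b; exact: ub.
Qed.

Lemma symm_admissible_le (g s : 'cV[R]_n) (m : R) :
  C g -> dotv g s < 0 -> (forall z, C z -> dotv z s <= m) ->
  forall t, (forall z, C z -> C (- (t *: z))) -> t <= m / - dotv g s.
Proof.
move=> Cg gs_lt0 C_le t Ct.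
rewrite ler_pdivlMr ?oppr_gt0 // mulrN -mulNr -dotvZl scaleNr.
exact: C_le (Ct g Cg).
Qed.

End SymmetryMeasure.

Theorem mainTheorem6 (R : realType) (n : nat) (C : set 'cV[R]_n)
  (g gp : 'cV[R]_n) (H : 'M[R]_n) :
  compact C -> convex_set (C : set (convex_lmodType 'cV[R]_n)) -> C 0 ->
  C g -> g != 0 -> sym_posdef H ->
  C gp -> (forall z, C z -> dotv z (- (H *m g)) <= dotv gp (- (H *m g))) ->
  \det (bfgs_update H (- (H *m g)) (gp - g)) <= \det H / (1 + symm C).
Proof.
move=> _ _ C0 Cg g_neq0 [HT H_pos] _ gp_max.
set s := - (H *m g); set q := dotv g (H *m g); set b := dotv gp s.
have q_gt0 : 0 < q := H_pos g g_neq0.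
have gs : dotv g s = - q by rewrite dotvNr.
have /andP[symm_ge0 symm_le] : 0 <= symm C <= b / q.
  rewrite -[q]opprK -gs; apply: symm_ge0_le C0 (symm_admissible_le Cg _ gp_max).
  by rewrite dotvNr oppr_lt0.
have bq_ge0 : 0 <= b / q := le_trans symm_ge0 symm_le.
have b_ge0 : 0 <= b by rewrite -(mul0r q) -ler_pdivlMr.
have sy : dotv s (gp - g) = b + q by rewrite dotvC dotvBl gs opprK.
rewrite det_bfgs_update_step // ?sy ?ltr_wpDl //.
have -> : q / (b + q) = (1 + b / q)^-1.
  by field; rewrite !gt_eqF // ltr_wpDr.
by rewrite ler_pM2l ?det_gt0_of_posdef // lef_pV2 ?lerD2l // posrE ltr_wpDr.
Qed.
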